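(* Let $\mathcal C\subseteq\{0,1\}^n$ and $\mathcal D\subseteq\{0,1\}^m$ be neural codes, $\phi:R_\mathcal D\to R_\mathcal C$ a ring homomorphism, and $\tau:R[m]\to R[n]$ a ring homomorphism. Then $\tau$ is compatible with $\phi$ if and only if $q_\phi=q_\tau|_\mathcal C$, where $q_\tau:\{0,1\}^n\to\{0,1\}^m$ and $q_\phi:\mathcal C\to\mathcal D$ are the associated code maps.
   Context: For a code $\mathcal C\subseteq\{0,1\}^n$, $R_\mathcal C$ is the ring of all functions $\mathcal C\to\mathbb F_2$ (equivalently $\mathbb F_2[x_1,\dots,x_n]$ modulo the ideal of polynomials vanishing on $\mathcal C$); $R[n]=R_{\{0,1\}^n}$. $R_\mathcal C$ is an $R[n]$-module via $(r\cdot f)(c)=r(c)f(c)$. $\rho_d$ denotes the indicator function of $\{d\}$. For any ring homomorphism $\psi:R_\mathcal B\to R_\mathcal A$ between neural rings and any $a\in\mathcal A$ there is a unique $b\in\mathcal B$ with $\psi(\rho_b)(a)=1$; the associated code map $q_\psi:\mathcal A\to\mathcal B$ sends $a$ to this $b$ (this applies in particular to $\tau:R[m]\to R[n]$ with $\mathcal A=\{0,1\}^n$, $\mathcal B=\{0,1\}^m$). A ring homomorphism $\tau:R[m]\to R[n]$ is compatible with $\phi$ if $\phi(r\cdot f)=\tau(r)\cdot\phi(f)$ for all $r\in R[m]$ and $f\in R_\mathcal D$. *)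

From mathcomp Require Import all_boot all_algebra.
Set Implicit Arguments. Unset Strict Implicit. Unset Printing Implicit Defensive.
Import GRing.Theory.
Local Open Scope ring_scope.

Definition word (n : nat) := {ffun 'I_n -> bool}.

Definition codeT (n : nat) (C : {set word n}) := {x : word n | x \in C}.

Definition RC (n : nat) (C : {set word n}) := {ffun codeT C -> 'F_2}.

Definition Rn (n : nat) := {ffun word n -> 'F_2}.

Definition rho (B : finType) (d : B) : {ffun B -> 'F_2} :=
  [ffun x => if x == d then 1 else 0].

(* Code map q_psi of a ring homomorphism psi : F_2^B -> F_2^A:
   q_psi a = the (unique) b with psi(rho_b)(a) = 1.
   Returned as an option (Some b); it is always Some for ring homs. *)
Definition codemap (A B : finType)
  (psi : {ffun B -> 'F_2} -> {ffun A -> 'F_2}) (a : A) : option B :=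
  [pick b | psi (rho b) a == 1].

Definition act (n : nat) (C : {set word n}) (r : Rn n) (f : RC C) : RC C :=
  [ffun c => r (val c) * f c].

Definition compatible (n m : nat) (C : {set word n}) (D : {set word m})
  (phi : RC D -> RC C) (tau : Rn m -> Rn n) : Prop :=
  forall (r : Rn m) (f : RC D), phi (act r f) = act (tau r) (phi f).

(** A ring morphism [psi : F_2^B -> F_2^A] is, at every point [a], evaluation
    at a single point [b]: the [rho b] are orthogonal idempotents summing to 1,
    so exactly one of them is sent to a function taking the value 1 at [a], and
    [f * rho b = f b * rho b] then forces [psi f a = f b].  Hence the code maps
    are these evaluation points, and compatibility of [tau] with [phi], read at
    [c], says [r (q_phi c) * f (q_phi c) = r (q_tau c) * f (q_phi c)] for all
    [r] and [f], i.e. [q_phi c = q_tau c]. *)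

From mathcomp Require Import all_boot all_algebra.
Set Implicit Arguments. Unset Strict Implicit. Unset Printing Implicit Defensive.
Import GRing.Theory.
Local Open Scope ring_scope.

Lemma F2_neq0 (x : 'F_2) : x != 0 -> x = 1.
Proof. by case: x => -[|[|k]] //= lt_k2 _; apply: val_inj. Qed.

Section PointEvaluation.

Variable B : finType.

Lemma rhoE (d x : B) : rho d x = (x == d)%:R.
Proof. by rewrite ffunE; case: eqP. Qed.

Lemma sum_rho : \sum_(b : B) rho b = 1.
Proof.
apply/ffunP => x; rewrite sum_ffunE ffunE (bigD1 x) //= big1 ?addr0.
  by rewrite rhoE eqxx.
by move=> y y_neq_x; rewrite rhoE eq_sym (negbTE y_neq_x).
Qed.

Lemma mul_rho (f : {ffun B -> 'F_2}) (b : B) : f * rho b = rho b *+ f b.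
Proof.
apply/ffunP => x; rewrite !ffunE ffunMnE rhoE.
by case: eqP => [->|_]; rewrite ?mulr1 ?mulr0 ?mul0rn // natr_Zp.
Qed.

Variables (A : finType) (psi : {rmorphism {ffun B -> 'F_2} -> {ffun A -> 'F_2}}).

Lemma rmorph_rho_eq1 (a : A) : exists b, psi (rho b) a = 1.
Proof.
have sum_neq0 : \sum_b psi (rho b) a != 0.
  by rewrite -sum_ffunE -rmorph_sum sum_rho rmorph1 ffunE.
have /existsP[b /F2_neq0 eq1] : [exists b, psi (rho b) a != 0].
  apply: contraNT sum_neq0 => /existsPn all0.
  by apply/eqP/big1 => b _; apply/eqP/negbNE.
by exists b.
Qed.

Lemma rmorph_eval (a : A) (b : B) :
  psi (rho b) a = 1 -> forall f, psi f a = f b.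
Proof.
move=> rho_b_a f.
have := congr1 (fun g : {ffun A -> 'F_2} => g a) (rmorphM psi f (rho b)).
by rewrite mul_rho rmorphMn ffunMnE !ffunE rho_b_a mulr1 natr_Zp.
Qed.

Lemma codemap_eval (a : A) (b : B) :
  (forall f, psi f a = f b) -> codemap psi a = Some b.
Proof.
move=> eval_b; rewrite /codemap; case: pickP => [b' | /(_ b)].
  by rewrite eval_b rhoE; case: (b =P b') => [->|].
by rewrite eval_b rhoE eqxx.
Qed.

Lemma codemap_evalP (a : A) :
  exists2 b, codemap psi a = Some b & forall f, psi f a = f b.
Proof.
have [b /rmorph_eval eval_b] := rmorph_rho_eq1 a.
by exists b => //; apply: codemap_eval.
Qed.

End PointEvaluation.

Theorem corollary2 (n m : nat) (C : {set word n}) (D : {set word m})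
  (phi : {rmorphism RC D -> RC C}) (tau : {rmorphism Rn m -> Rn n}) :
  compatible phi tau <->
  (forall c : codeT C,
     omap val (codemap (A := codeT C) (B := codeT D) phi c)
     = codemap (A := word n) (B := word m) tau (val c)).
Proof.
split=> [compat c | codemaps_agree r f].
- have [d -> phi_c] := codemap_evalP phi c.
  have [w -> tau_c] := codemap_evalP tau (val c).
  have := congr1 (fun g : RC C => g c) (compat (rho (val d)) 1).
  rewrite /act !ffunE phi_c tau_c rmorph1 /RC !ffunE eqxx !mulr1.
  by case: (w =P val d) => [->|].
- apply/ffunP => c; have := codemaps_agree c.
  have [d -> phi_c] := codemap_evalP phi c.
  have [w -> tau_c] := codemap_evalP tau (val c).
  by case=> w_eq; rewrite /act !ffunE !phi_c tau_c /RC ffunE -w_eq.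
Qed.
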